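(* Let $w>1$ be a fixed-precision binary number represented by $n$ bits, of which the first $m$ correspond to its integer part, and let $b\geq n$. Consider the following algorithm (INV): if $w=1$ return $1$; otherwise set $\hat{x}_0 = 2^{-p}$, where $p\in\mathbb{N}$ is such that $2^p > w \geq 2^{p-1}$, set $s=\lceil \log_2 b\rceil$, and for $i=1,\dots,s$ compute exactly (in fixed precision arithmetic) $x_i = -w\hat{x}_{i-1}^2 + 2\hat{x}_{i-1}$ (Newton's iteration for $1/w$) and let $\hat{x}_i$ be $x_i$ truncated to $b$ bits after the decimal point; return $\hat{x}_s$. Then the returned value $\hat{x}_s$ approximates $\frac{1}{w}$ with error \begin{equation*} \left|\hat{x}_s - \frac{1}{w}\right| \leq \frac{2+ \log_2 b}{2^b}. \end{equation*}
   Context: Numbers are held in fixed precision: an $n$-bit register holding $w=\sum_{j=m-n}^{m-1} w^{(j)}2^j$, with $m$ bits for the integer part and $n-m$ bits for the fractional part. The result of each Newton step is computed exactly using addition and multiplication and then truncated to $b$ bits after the decimal point before being passed to the next step. The corollary follows from a prior result (Theorem B.1 of an earlier paper by the authors) stating that $s$ steps of this truncated iteration give $|\hat{x}_s - \frac{1}{w}| \leq (1/2)^{2^s} + s2^{-b}$. *)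

From Stdlib Require Import Reals ZArith List.
Open Scope R_scope.

(* Value of an n-bit fixed-precision register with m integer bits:
   w = sum_{j=m-n}^{m-1} w^(j) 2^j.  Bit w^(j) is [bits j], j : Z. *)
Definition fixed_val (n m : nat) (bits : Z -> bool) : R :=
  fold_right Rplus 0
    (map (fun k : nat =>
            let j := (Z.of_nat k + Z.of_nat m - Z.of_nat n)%Z in
            (if bits j then 1 else 0) * powerRZ 2 j)
         (seq 0 n)).

Definition trunc_bits (b : nat) (x : R) : R :=
  IZR (Int_part (x * 2 ^ b)) / 2 ^ b.

Definition ceilR (x : R) : Z := (- Int_part (- x))%Z.

Definition log2R (x : R) : R := ln x / ln 2.

Fixpoint newton_hat (w : R) (b p : nat) (i : nat) : R :=
  match i with
  | O => / 2 ^ p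
  | S i' => let x := newton_hat w b p i' in
            trunc_bits b (- w * x ^ 2 + 2 * x)
  end.

(* Algorithm INV (p is the integer with 2^p > w >= 2^(p-1)). *)
Definition INV (w : R) (b p : nat) : R :=
  if Req_EM_T w 1 then 1
  else newton_hat w b p (Z.to_nat (ceilR (log2R (INR b)))).

(** Each Newton step squares the residual [1 - w x], and truncation to [b]
    bits raises it by at most [w 2^-b].  Starting from [x_0 = 2^-p], whose
    residual is at most [1/2], the residual after [i] steps is at most
    [2^-(2^i) + i w 2^-b]; dividing by [w > 1] bounds the error, and
    [s = ceil (log2 b)] steps make the quadratic part at most [2^-b]. *)

From Stdlib Require Import Reals ZArith List Lra Psatz.
Open Scope R_scope.

Lemma pow2_pos k : 0 < 2 ^ k.
Proof. apply pow_lt; lra. Qed.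

Lemma trunc_bits_scaled b x : trunc_bits b x * 2 ^ b = IZR (Int_part (x * 2 ^ b)).
Proof. unfold trunc_bits; field; apply pow_nonzero; lra. Qed.

Lemma trunc_bits_le b x : trunc_bits b x <= x.
Proof.
  apply (Rmult_le_reg_r (2 ^ b)); [apply pow2_pos|].
  rewrite trunc_bits_scaled; apply base_Int_part.
Qed.

Lemma trunc_bits_gt b x : x - / 2 ^ b < trunc_bits b x.
Proof.
  pose proof (pow2_pos b) as Hb.
  apply (Rmult_lt_reg_r (2 ^ b)); [exact Hb|].
  rewrite trunc_bits_scaled, Rmult_minus_distr_r, Rinv_l by lra.
  destruct (base_Int_part (x * 2 ^ b)); lra.
Qed.

Lemma trunc_bits_nonneg b x : 0 <= x -> 0 <= trunc_bits b x.
Proof.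
  intro Hx; pose proof (pow2_pos b) as Hb.
  apply (Rmult_le_reg_r (2 ^ b)); [exact Hb|].
  rewrite Rmult_0_l, trunc_bits_scaled.
  destruct (base_Int_part (x * 2 ^ b)) as [_ Hgt].
  apply IZR_le.
  assert (-1 < Int_part (x * 2 ^ b))%Z by (apply lt_IZR; nra).
  lia.
Qed.

Lemma pow2_pow2_succ i : 2 ^ (2 ^ S i) = (2 ^ (2 ^ i)) ^ 2.
Proof. rewrite <- pow_mult; f_equal; simpl; lia. Qed.

Lemma pow2_pow2_ge i : 2 * (INR i + 1) <= 2 ^ (2 ^ i).
Proof.
  induction i as [|i IH]; [simpl; lra|].
  rewrite pow2_pow2_succ, S_INR.
  pose proof (pos_INR i); nra.
Qed.

(* One step of the residual recursion [e' <= e^2 + c], [e' <= 1].  When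
   [2a + ic > 1] the quadratic estimate fails, but then already [(i+1)c >= 1]. *)
Lemma perturbed_square_le (a c i e e' : R) :
  0 <= c -> 0 <= i -> 0 <= a -> a * (2 * (i + 1)) <= 1 ->
  0 <= e <= 1 -> e <= a + i * c ->
  e' <= e ^ 2 + c -> e' <= 1 ->
  e' <= a ^ 2 + (i + 1) * c.
Proof.
  intros Hc Hi Ha Ha_small [He0 He1] He He'sq He'1.
  destruct (Rle_dec (2 * a + i * c) 1) as [Hsmall|Hlarge].
  - assert (e ^ 2 <= (a + i * c) ^ 2) by (apply pow_incr; lra).
    assert (0 <= (i * c) * (1 - (2 * a + i * c))) by (apply Rmult_le_pos; nra).
    nra.
  - assert ((i + 1) * (i * c) >= i) by nra.
    assert (i > 0) by nra.
    nra.
Qed.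

Lemma newton_hat_S w b p i :
  newton_hat w b p (S i)
  = trunc_bits b (- w * newton_hat w b p i ^ 2 + 2 * newton_hat w b p i).
Proof. reflexivity. Qed.

Section NewtonInverse.

Variables (w : R) (b p : nat).
Hypothesis w_pos : 0 < w.
Hypothesis w_le : w <= 2 ^ p.
Hypothesis w_ge : 2 ^ p / 2 <= w.

Let x i := newton_hat w b p i.

Lemma newton_residual_sq y : 1 - w * (- w * y ^ 2 + 2 * y) = (1 - w * y) ^ 2.
Proof. ring. Qed.

Lemma newton_hat_bounds i : 0 <= x i /\ w * x i <= 1.
Proof.
  induction i as [|i [Hx0 Hx1]].
  - pose proof (pow2_pos p).
    unfold x; simpl newton_hat; split.
    + left; apply Rinv_0_lt_compat; lra.
    + apply (Rmult_le_reg_r (2 ^ p)); [lra|].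
      rewrite Rmult_assoc, Rinv_l; lra.
  - unfold x at 1 2; rewrite newton_hat_S; fold (x i).
    set (y := - w * x i ^ 2 + 2 * x i).
    assert (Hy0 : 0 <= y) by (unfold y; nra).
    assert (Hwy : w * y <= 1).
    { pose proof (newton_residual_sq (x i)) as Hsq; fold y in Hsq.
      pose proof (pow2_ge_0 (1 - w * x i)); lra. }
    pose proof (trunc_bits_le b y); pose proof (trunc_bits_nonneg b y Hy0).
    split; nra.
Qed.

Lemma newton_hat_residual_le i :
  1 - w * x i <= / 2 ^ (2 ^ i) + INR i * (w / 2 ^ b).
Proof.
  pose proof (pow2_pos b).
  assert (Hc : 0 <= w / 2 ^ b) by (apply Rlt_le, Rdiv_lt_0_compat; lra).
  induction i as [|i IH].
  - pose proof (pow2_pos p).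
    unfold x; simpl; rewrite Rmult_0_l, Rplus_0_r.
    assert (/ 2 <= w * / 2 ^ p); [|lra].
    apply (Rmult_le_reg_r (2 ^ p)); [lra|].
    rewrite Rmult_assoc, Rinv_l; lra.
  - destruct (newton_hat_bounds i) as [Hx0 Hx1].
    destruct (newton_hat_bounds (S i)) as [Hxs0 _].
    unfold x in Hxs0 |- *; rewrite newton_hat_S in Hxs0 |- *; fold (x i) in Hxs0 |- *.
    set (y := - w * x i ^ 2 + 2 * x i) in *.
    set (t := trunc_bits b y) in *.
    assert (Ht : y - / 2 ^ b < t) by apply trunc_bits_gt.
    pose proof (pos_INR i).
    assert (Ha : / 2 ^ (2 ^ i) * (2 * (INR i + 1)) <= 1).
    { pose proof (pow2_pow2_ge i); pose proof (pow2_pos (2 ^ i)).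
      apply (Rmult_le_reg_l (2 ^ (2 ^ i))); [lra|].
      rewrite <- Rmult_assoc, Rinv_r; lra. }
    rewrite pow2_pow2_succ, <- pow_inv, S_INR.
    apply (perturbed_square_le _ _ _ (1 - w * x i)); try lra.
    + left; apply Rinv_0_lt_compat, pow2_pos.
    + split; nra.
    + rewrite <- (newton_residual_sq (x i)); fold y.
      assert (w * (y - t) <= w / 2 ^ b); [|lra].
      unfold Rdiv; apply Rmult_le_compat_l; lra.
    + nra.
Qed.

Theorem newton_hat_error s :
  1 <= w -> Rabs (x s - / w) <= / 2 ^ (2 ^ s) + INR s / 2 ^ b.
Proof.
  intro Hw1.
  destruct (newton_hat_bounds s) as [_ Hxs].
  pose proof (newton_hat_residual_le s) as Hres.
  assert (Herr : / w - x s = (1 - w * x s) / w) by (field; lra).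
  assert (Herr_nonneg : 0 <= (1 - w * x s) / w).
  { apply Rmult_le_pos; [lra | left; apply Rinv_0_lt_compat; lra]. }
  rewrite Rabs_minus_sym, Herr, Rabs_right by lra.
  apply (Rmult_le_reg_r w); [lra|].
  unfold Rdiv in *; rewrite Rmult_assoc, Rinv_l, Rmult_1_r by lra.
  pose proof (pow2_pos (2 ^ s)); pose proof (pow2_pos b); pose proof (pos_INR s).
  assert (0 < / 2 ^ (2 ^ s)) by (apply Rinv_0_lt_compat; lra).
  nra.
Qed.

End NewtonInverse.

Lemma ceilR_bounds x : x <= IZR (ceilR x) < x + 1.
Proof.
  unfold ceilR; rewrite opp_IZR.
  destruct (base_Int_part (- x)); lra.
Qed.

Lemma log2R_nonneg x : 1 <= x -> 0 <= log2R x.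
Proof.
  intro Hx; unfold log2R.
  assert (Hln2 : 0 < ln 2) by (rewrite <- ln_1; apply ln_increasing; lra).
  apply Rmult_le_pos; [|left; apply Rinv_0_lt_compat; exact Hln2].
  destruct (Req_dec x 1) as [->|Hne]; [rewrite ln_1; lra|].
  rewrite <- ln_1; left; apply ln_increasing; lra.
Qed.

Lemma le_pow2_of_log2R_le x k : 0 < x -> log2R x <= INR k -> x <= 2 ^ k.
Proof.
  intros Hx Hk.
  assert (Hln2 : 0 < ln 2) by (rewrite <- ln_1; apply ln_increasing; lra).
  destruct (Rle_dec x (2 ^ k)) as [Hle|Hgt]; [exact Hle|exfalso].
  assert (Hln : ln (2 ^ k) < ln x) by (apply ln_increasing; [apply pow2_pos|lra]).
  rewrite ln_pow in Hln by lra.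
  unfold log2R, Rdiv in Hk.
  apply (Rmult_le_compat_r (ln 2)) in Hk; [|lra].
  rewrite Rmult_assoc, Rinv_l in Hk; lra.
Qed.

Lemma ceil_log2R_bounds x :
  1 <= x ->
  let s := Z.to_nat (ceilR (log2R x)) in
  x <= 2 ^ s /\ INR s < log2R x + 1.
Proof.
  intros Hx s.
  pose proof (log2R_nonneg x Hx); pose proof (ceilR_bounds (log2R x)).
  assert (Hs : INR s = IZR (ceilR (log2R x))).
  { unfold s; rewrite INR_IZR_INZ, Z2Nat.id; [reflexivity|].
    apply le_IZR; lra. }
  split; [apply le_pow2_of_log2R_le|]; lra.
Qed.

Lemma fixed_val_0 m bits : fixed_val 0 m bits = 0.
Proof. reflexivity. Qed.

Theorem corollary1 (n m : nat) (bits : Z -> bool) (b p : nat) :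
  (m <= n)%nat ->
  1 < fixed_val n m bits ->
  (n <= b)%nat ->
  fixed_val n m bits < 2 ^ p ->
  2 ^ p / 2 <= fixed_val n m bits ->
  Rabs (INV (fixed_val n m bits) b p - / fixed_val n m bits)
    <= (2 + log2R (INR b)) / 2 ^ b.
Proof.
  intros _ Hw Hnb Hp1 Hp2.
  set (w := fixed_val n m bits) in *.
  assert (Hb : (1 <= b)%nat).
  { destruct n; [unfold w in Hw; rewrite fixed_val_0 in Hw; lra | lia]. }
  unfold INV; destruct (Req_EM_T w 1) as [Heq|_]; [lra|].
  destruct (ceil_log2R_bounds (INR b)) as [Hbs Hs]; [apply (le_INR 1); exact Hb|].
  set (s := Z.to_nat (ceilR (log2R (INR b)))) in *.
  assert (Hquad : / 2 ^ (2 ^ s) <= / 2 ^ b).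
  { apply Rinv_le_contravar; [apply pow2_pos|].
    apply Rle_pow; [lra|].
    apply INR_le; rewrite pow_INR; replace (INR 2) with 2 by (simpl; lra); exact Hbs. }
  eapply Rle_trans; [apply newton_hat_error; lra|].
  unfold Rdiv; pose proof (pow2_pos b).
  assert (0 < / 2 ^ b) by (apply Rinv_0_lt_compat; lra).
  nra.
Qed.
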